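(* $\mathsf{C}_{\mathbb{N}^\mathbb{N}} \equiv_{\mathrm{sW}} \mathsf{FindHS}_{\boldsymbol{\Delta}^0_1} \equiv_{\mathrm{sW}} \mathsf{FindHS}_{\boldsymbol{\Pi}^0_1}$.
   Context: Strong Weihrauch reducibility: $f\le_{\mathrm{sW}} g$ iff there are computable $\Phi,\Psi:\subseteq\mathbb{N}^\mathbb{N}\to\mathbb{N}^\mathbb{N}$ such that for every realizer $G$ of $g$, $\Psi\circ G\circ\Phi$ realizes $f$; $\equiv_{\mathrm{sW}}$ is reducibility both ways. The Ramsey space $[\mathbb{N}]^\mathbb{N}$ is the set of strictly increasing functions $\mathbb{N}\to\mathbb{N}$ with the Baire-space topology; $fg=f\circ g$. For $P\subseteq[\mathbb{N}]^\mathbb{N}$, $f$ is homogeneous for $P$ if either $fg\in P$ for all $g\in[\mathbb{N}]^\mathbb{N}$ ($f$ lands in $P$) or $fg\notin P$ for all $g$ ($f$ avoids $P$); $\mathrm{HS}(P)$ is the set of homogeneous solutions. A name for an open $P\subseteq[\mathbb{N}]^\mathbb{N}$ is an enumeration of a set of finite strictly increasing strings whose cones have union $P$; a name for a clopen set is a pair of names for it and its complement. $\mathsf{FindHS}_{\boldsymbol{\Pi}^0_1}$: input an open $P$ with $\mathrm{HS}(P)\setminus P\neq\emptyset$, output any element of $\mathrm{HS}(P)\setminus P$. $\mathsf{FindHS}_{\boldsymbol{\Delta}^0_1}$: input a clopen $D$ with $\mathrm{HS}(D)\cap D\ne\emptyset$, output any element of $\mathrm{HS}(D)\cap D$. $\mathsf{C}_{\mathbb{N}^\mathbb{N}}$: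 input a name (e.g. a tree $T$ on $\mathbb{N}$ with $[T]$ the set) of a nonempty closed subset of $\mathbb{N}^\mathbb{N}$, output any element of it. *)

From Stdlib Require Import Arith List.
Import ListNotations.

Definition pair (x y : nat) : nat := (x + y) * (x + y + 1) / 2 + y.

(* its inverse, defined by enumerating the diagonals *)
Fixpoint unpair (n : nat) : nat * nat :=
  match n with
  | 0 => (0, 0)
  | S m => let (x, y) := unpair m in
           match x with
           | 0 => (S y, 0)
           | S x' => (x', S y)
           end
  end.

Fixpoint code (s : list nat) : nat :=
  match s with
  | [] => 0
  | x :: s' => S (pair x (code s'))
  end.

Definition pref (p : nat -> nat) (n : nat) : list nat := map p (seq 0 n).

Inductive rcode : Type :=
| rZero : rcode
| rSucc : rcode
| rId : rcode
| rFst : rcode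
| rSnd : rcode
| rComp : rcode -> rcode -> rcode
| rPair : rcode -> rcode -> rcode
| rPrim : rcode -> rcode -> rcode
| rMu : rcode -> rcode.

Inductive ev : rcode -> nat -> nat -> Prop :=
| evZero x : ev rZero x 0
| evSucc x : ev rSucc x (S x)
| evId x : ev rId x x
| evFst x : ev rFst x (fst (unpair x))
| evSnd x : ev rSnd x (snd (unpair x))
| evComp f g x y z : ev g x y -> ev f y z -> ev (rComp f g) x z
| evPair f g x y z : ev f x y -> ev g x z -> ev (rPair f g) x (pair y z)
| evPrim0 f g a z : ev f a z -> ev (rPrim f g) (pair a 0) z
| evPrimS f g a n y z :
    ev (rPrim f g) (pair a n) y -> ev g (pair a (pair n y)) z ->
    ev (rPrim f g) (pair a (S n)) z
| evMu f x n :
    ev f (pair x n) 0 ->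
    (forall m, m < n -> exists k, ev f (pair x m) (S k)) ->
    ev (rMu f) x n.

Definition computable (h : nat -> nat) : Prop :=
  exists c : rcode, forall x, ev c x (h x).

(* The partial functional coded by h maps p to q: after reading the
   prefix p|n, h answers the i-th output digit as (S v) or "not yet" (0);
   every digit is eventually answered, and all answers are correct. *)
Definition computes (h : nat -> nat) (p q : nat -> nat) : Prop :=
  forall i,
    (exists n, h (pair (code (pref p n)) i) = S (q i)) /\
    (forall n v, h (pair (code (pref p n)) i) = S v -> v = q i).

(* a problem is a relation between names of inputs and names of outputs;
   its domain is the set of names having some solution *)
Definition problem := (nat -> nat) -> (nat -> nat) -> Prop.

Definition realizer (g : problem) (G : (nat -> nat) -> (nat -> nat)) : Prop :=
  forall p, (exists q, g p q) -> g p (G p).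

Definition sW_le (f g : problem) : Prop :=
  exists hPhi hPsi : nat -> nat,
    computable hPhi /\ computable hPsi /\
    forall G, realizer g G ->
      forall p, (exists y, f p y) ->
        exists q r, computes hPhi p q /\ computes hPsi (G q) r /\ f p r.

Definition sW_eq (f g : problem) : Prop := sW_le f g /\ sW_le g f.

Definition in_tree (p : nat -> nat) (s : list nat) : Prop := p (code s) = 1.

Definition is_tree_name (p : nat -> nat) : Prop :=
  (forall s, p (code s) = 0 \/ p (code s) = 1) /\
  (forall s t, in_tree p (s ++ t) -> in_tree p s).

Definition body (p : nat -> nat) (f : nat -> nat) : Prop :=
  forall n, in_tree p (pref f n).

Definition C_Baire : problem := fun p q => is_tree_name p /\ body p q.

Definition strinc (f : nat -> nat) : Prop := forall n, f n < f (S n).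

Definition strinc_list (s : list nat) : Prop :=
  forall i, S i < length s -> nth i s 0 < nth (S i) s 0.

(* names of open subsets of [N]^N : enumerations, p n = S (code s) means
   s is enumerated, p n = 0 means nothing is enumerated at stage n *)
Definition enumerated (p : nat -> nat) (s : list nat) : Prop :=
  exists n, p n = S (code s).

Definition open_name (p : nat -> nat) : Prop :=
  forall s, enumerated p s -> strinc_list s.

Definition in_open (p : nat -> nat) (f : nat -> nat) : Prop :=
  strinc f /\ exists s, enumerated p s /\ pref f (length s) = s.

Definition lands (P : (nat -> nat) -> Prop) (f : nat -> nat) : Prop :=
  forall g, strinc g -> P (fun n => f (g n)).
Definition avoids (P : (nat -> nat) -> Prop) (f : nat -> nat) : Prop :=
  forall g, strinc g -> ~ P (fun n => f (g n)).
Definition HS (P : (nat -> nat) -> Prop) (f : nat -> nat) : Prop :=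
  strinc f /\ (lands P f \/ avoids P f).

Definition FindHS_Pi01 : problem :=
  fun p q => open_name p /\ HS (in_open p) q /\ ~ in_open p q.

(* names of clopen sets: pairs <p1,p2> (interleaving) of open names of
   the set and of its complement in [N]^N *)
Definition pi1 (p : nat -> nat) : nat -> nat := fun n => p (2 * n).
Definition pi2 (p : nat -> nat) : nat -> nat := fun n => p (2 * n + 1).

Definition clopen_name (p : nat -> nat) : Prop :=
  open_name (pi1 p) /\ open_name (pi2 p) /\
  forall f, strinc f -> (in_open (pi1 p) f <-> ~ in_open (pi2 p) f).

Definition FindHS_Delta01 : problem :=
  fun p q => clopen_name p /\ HS (in_open (pi1 p)) q /\ in_open (pi1 p) q.

From Stdlib Require Import Arith Cantor List Lia Bool.
Import ListNotations.

(* A tree [T] yields a clopen subset [D_T] of the Ramsey space decided by the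
   first two values: [h] lies in [D_T] when [h 0] and [h 1] code strings of [T],
   the second properly extending the first.  The codes of the prefixes of a path
   of [T] form a homogeneous solution lying in [D_T]; conversely, if every
   subsequence of [h] lies in [D_T], then the strings coded by the [h (n+1)] are
   coherent, lie in [T] and have length greater than [n], so their diagonal is a
   path.  In the other direction, the increasing sequences avoiding an open set
   [P] are the paths of a tree computable from a name of [P]: an increasing
   string dies as soon as it contains all entries of a string enumerated into
   [P] at an earlier stage.  An element of HS(P) \ P is just an increasing
   sequence avoiding [P], and for a clopen [D] an element of HS(D) ∩ D is an
   increasing sequence avoiding the complement of [D]; the four reductions are
   assembled from these two constructions. *)

Definition unpair1 (n : nat) : nat := fst (unpair n).
Definition unpair2 (n : nat) : nat := snd (unpair n).

Lemma unpair_of_nat n : unpair n = Cantor.of_nat n.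
Proof.
  induction n as [|n IH]; [reflexivity|].
  cbn. fold (Cantor.of_nat n). rewrite <- IH.
  destruct (unpair n) as [[|x] y]; reflexivity.
Qed.

Lemma pair_to_nat x y : pair x y = Cantor.to_nat (x, y).
Proof.
  rewrite Cantor.to_nat_spec2. unfold pair.
  rewrite (Nat.add_comm y x), Nat.add_1_r. apply Nat.add_comm.
Qed.

Lemma unpair_pair x y : unpair (pair x y) = (x, y).
Proof. rewrite unpair_of_nat, pair_to_nat. apply Cantor.cancel_of_to. Qed.

Lemma unpair1_pair x y : unpair1 (pair x y) = x.
Proof. unfold unpair1. now rewrite unpair_pair. Qed.

Lemma unpair2_pair x y : unpair2 (pair x y) = y.
Proof. unfold unpair2. now rewrite unpair_pair. Qed.

Lemma pair_unpair n : pair (unpair1 n) (unpair2 n) = n.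
Proof.
  unfold unpair1, unpair2. rewrite pair_to_nat, unpair_of_nat, <- surjective_pairing.
  apply Cantor.cancel_to_of.
Qed.

Lemma pair_inj x y x' y' : pair x y = pair x' y' -> x = x' /\ y = y'.
Proof.
  intro E. apply (f_equal unpair) in E. rewrite !unpair_pair in E.
  now injection E.
Qed.

Lemma le_pair_r x y : y <= pair x y.
Proof. unfold pair. lia. Qed.

Lemma pair_lt_mono_r x y y' : y < y' -> pair x y < pair x y'.
Proof.
  intro H. unfold pair.
  enough ((x + y) * (x + y + 1) / 2 <= (x + y') * (x + y' + 1) / 2) by lia.
  apply Nat.Div0.div_le_mono; nia.
Qed.

Lemma unpair2_le n : unpair2 n <= n.
Proof. rewrite <- (pair_unpair n) at 2. apply le_pair_r. Qed.

(** * Primitive recursive functions *)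

Lemma recursion_S (A : Type) (a : A) f n : Nat.recursion a f (S n) = f n (Nat.recursion a f n).
Proof. reflexivity. Qed.

Definition computableb (b : nat -> bool) : Prop := computable (fun x => Nat.b2n (b x)).

Lemma computable_ext f g : (forall x, f x = g x) -> computable f -> computable g.
Proof. intros E [c Hc]. exists c. intro x. rewrite <- E. apply Hc. Qed.

Lemma computable_id : computable (fun x => x).
Proof. exists rId. constructor. Qed.

Lemma computable_comp f g : computable f -> computable g -> computable (fun x => f (g x)).
Proof. intros [c Hc] [d Hd]. exists (rComp c d). intro x. econstructor; eauto. Qed.

Lemma computable_S f : computable f -> computable (fun x => S (f x)).
Proof. apply (computable_comp S). exists rSucc. constructor. Qed.

Lemma computable_const n : computable (fun _ => n).
Proof.
  induction n as [|n IH].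
  - exists rZero. constructor.
  - exact (computable_S _ IH).
Qed.

Lemma computable_unpair1 f : computable f -> computable (fun x => unpair1 (f x)).
Proof. apply (computable_comp unpair1). exists rFst. constructor. Qed.

Lemma computable_unpair2 f : computable f -> computable (fun x => unpair2 (f x)).
Proof. apply (computable_comp unpair2). exists rSnd. constructor. Qed.

Lemma computable_pair f g :
  computable f -> computable g -> computable (fun x => pair (f x) (g x)).
Proof. intros [c Hc] [d Hd]. exists (rPair c d). intro x. constructor; auto. Qed.

Lemma computable_recursion (b k : nat -> nat) (s : nat -> nat -> nat -> nat) :
  computable b ->
  computable (fun z => s (unpair1 z) (unpair1 (unpair2 z)) (unpair2 (unpair2 z))) ->
  computable k ->
  computable (fun x => Nat.recursion (b x) (s x) (k x)).
Proof.
  intros [cb Hb] [cs Hs] [ck Hk].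
  exists (rComp (rPrim cb cs) (rPair rId ck)). intro x.
  econstructor; [constructor; [constructor | apply Hk]|].
  induction (k x) as [|n IH]; [constructor; apply Hb|].
  econstructor; [exact IH|].
  specialize (Hs (pair x (pair n (Nat.recursion (b x) (s x) n)))).
  rewrite !unpair2_pair, !unpair1_pair in Hs. exact Hs.
Qed.

Lemma computable_pred f : computable f -> computable (fun x => pred (f x)).
Proof.
  intro Hf.
  apply (computable_ext (fun x => Nat.recursion 0 (fun n _ => n) (f x))).
  - intro x. now destruct (f x).
  - apply (computable_recursion (fun _ => 0) f (fun _ n _ => n));
      auto using computable_const, computable_unpair1, computable_unpair2, computable_id.
Qed.

Lemma computable_add f g : computable f -> computable g -> computable (fun x => f x + g x).
Proof.
  intros Hf Hg.
  apply (computable_ext (fun x => Nat.recursion (f x) (fun _ y => S y) (g x))).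
  - intro x. induction (g x) as [|n IH]; cbn; lia.
  - apply (computable_recursion f g (fun _ _ y => S y));
      auto using computable_S, computable_unpair2, computable_id.
Qed.

Lemma computable_sub f g : computable f -> computable g -> computable (fun x => f x - g x).
Proof.
  intros Hf Hg.
  apply (computable_ext (fun x => Nat.recursion (f x) (fun _ y => pred y) (g x))).
  - intro x. induction (g x) as [|n IH]; cbn; lia.
  - apply (computable_recursion f g (fun _ _ y => pred y));
      auto using computable_pred, computable_unpair2, computable_id.
Qed.

Lemma computable_mul f g : computable f -> computable g -> computable (fun x => f x * g x).
Proof.
  intros Hf Hg.
  apply (computable_ext (fun x => Nat.recursion 0 (fun _ y => y + f x) (g x))).
  - intro x. induction (g x) as [|n IH]; cbn; lia.
  - apply (computable_recursion (fun _ => 0) g (fun x _ y => y + f x));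
      auto using computable_const.
    apply computable_add; auto using computable_unpair2, computable_id.
    apply (computable_comp f); auto using computable_unpair1, computable_id.
Qed.

Lemma computable_if (c : nat -> bool) a b :
  computableb c -> computable a -> computable b ->
  computable (fun x => if c x then a x else b x).
Proof.
  intros Hc Ha Hb.
  apply (computable_ext (fun x => Nat.recursion (b x) (fun _ _ => a x) (Nat.b2n (c x)))).
  - intro x. now destruct (c x).
  - apply (computable_recursion b (fun x => Nat.b2n (c x)) (fun x _ _ => a x));
      [exact Hb| |exact Hc].
    apply (computable_comp a); auto using computable_unpair1, computable_id.
Qed.

Lemma computableb_ltb f g : computable f -> computable g -> computableb (fun x => f x <? g x).
Proof.
  intros Hf Hg.
  apply (computable_ext (fun x => 1 - (S (f x) - g x))).
  - intro x. destruct (Nat.ltb_spec (f x) (g x)); cbn [Nat.b2n]; lia.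
  - auto using computable_sub, computable_const, computable_S.
Qed.

Lemma computableb_eqb f g : computable f -> computable g -> computableb (fun x => f x =? g x).
Proof.
  intros Hf Hg.
  apply (computable_ext (fun x => 1 - ((f x - g x) + (g x - f x)))).
  - intro x. destruct (Nat.eqb_spec (f x) (g x)); cbn [Nat.b2n]; lia.
  - auto using computable_sub, computable_add, computable_const.
Qed.

Lemma computableb_negb a : computableb a -> computableb (fun x => negb (a x)).
Proof.
  intro Ha. apply (computable_ext (fun x => 1 - Nat.b2n (a x))).
  - intro x. now destruct (a x).
  - auto using computable_sub, computable_const.
Qed.

Lemma computableb_andb a b : computableb a -> computableb b -> computableb (fun x => a x && b x).
Proof.
  intros Ha Hb. apply (computable_ext (fun x => if a x then Nat.b2n (b x) else 0)).
  - intro x. now destruct (a x).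
  - auto using computable_if, computable_const.
Qed.

Lemma computableb_orb a b : computableb a -> computableb b -> computableb (fun x => a x || b x).
Proof.
  intros Ha Hb. apply (computable_ext (fun x => if a x then 1 else Nat.b2n (b x))).
  - intro x. now destruct (a x).
  - auto using computable_if, computable_const.
Qed.

Lemma computableb_even f : computable f -> computableb (fun x => Nat.even (f x)).
Proof.
  intro Hf.
  apply (computable_ext (fun x => Nat.recursion 1 (fun _ y => 1 - y) (f x))).
  - intro x. induction (f x) as [|n IH]; [reflexivity|].
    rewrite recursion_S, IH, Nat.even_succ, <- Nat.negb_even.
    now destruct (Nat.even n).
  - apply (computable_recursion (fun _ => 1) f (fun _ _ y => 1 - y));
      auto using computable_const, computable_sub, computable_unpair2, computable_id.
Qed.

Lemma div2_succ n : Nat.div2 (S n) = if Nat.even n then Nat.div2 n else S (Nat.div2 n).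
Proof.
  pose proof (Nat.div2_odd n) as E. pose proof (Nat.div2_odd (S n)) as ES.
  rewrite Nat.odd_succ in ES. rewrite <- Nat.negb_even in E.
  destruct (Nat.even n); cbn in *; lia.
Qed.

Lemma computable_div2 f : computable f -> computable (fun x => Nat.div2 (f x)).
Proof.
  intro Hf.
  apply (computable_ext
    (fun x => Nat.recursion 0 (fun n y => if Nat.even n then y else S y) (f x))).
  - intro x. induction (f x) as [|n IH]; [reflexivity|].
    rewrite div2_succ, <- IH. reflexivity.
  - apply (computable_recursion (fun _ => 0) f (fun _ n y => if Nat.even n then y else S y));
      auto using computable_const.
    apply computable_if; auto using computableb_even, computable_S, computable_unpair1,
      computable_unpair2, computable_id.
Qed.

Lemma computableb_comp2 (B : nat -> nat -> bool) f g :
  computableb (fun z => B (unpair1 z) (unpair2 z)) -> computable f -> computable g ->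
  computableb (fun x => B (f x) (g x)).
Proof.
  intros HB Hf Hg.
  apply (computable_ext
    (fun x => Nat.b2n (B (unpair1 (pair (f x) (g x))) (unpair2 (pair (f x) (g x)))))).
  - intro x. now rewrite unpair1_pair, unpair2_pair.
  - exact (computable_comp _ _ HB (computable_pair _ _ Hf Hg)).
Qed.

Lemma computableb_forallb (q : nat -> nat -> bool) k :
  computableb (fun z => q (unpair1 z) (unpair2 z)) -> computable k ->
  computableb (fun x => forallb (q x) (seq 0 (k x))).
Proof.
  intros Hq Hk.
  apply (computable_ext
    (fun x => Nat.recursion 1 (fun n acc => if q x n then acc else 0) (k x))).
  - intro x. induction (k x) as [|n IH]; [reflexivity|].
    rewrite seq_S, forallb_app. cbn. rewrite IH, andb_true_r.
    now destruct (forallb (q x) (seq 0 n)), (q x n).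
  - apply (computable_recursion (fun _ => 1) k (fun x n acc => if q x n then acc else 0));
      auto using computable_const.
    apply computable_if; auto using computable_unpair2, computable_id, computable_const.
    apply computableb_comp2; [exact Hq|apply computable_unpair1, computable_id|].
    apply computable_unpair1, computable_unpair2, computable_id.
Qed.

Lemma existsb_negb_forallb (A : Type) (q : A -> bool) l :
  existsb q l = negb (forallb (fun a => negb (q a)) l).
Proof. induction l as [|a l IH]; cbn; [reflexivity|]. rewrite IH. now destruct (q a). Qed.

Lemma forallb_ext_in (A : Type) (f g : A -> bool) l :
  (forall x, In x l -> f x = g x) -> forallb f l = forallb g l.
Proof.
  induction l as [|a l IH]; intro H; cbn; [reflexivity|].
  rewrite H, IH; auto using in_eq, in_cons.
Qed.

Lemma computableb_existsb (q : nat -> nat -> bool) k :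
  computableb (fun z => q (unpair1 z) (unpair2 z)) -> computable k ->
  computableb (fun x => existsb (q x) (seq 0 (k x))).
Proof.
  intros Hq Hk.
  apply (computable_ext (fun x => Nat.b2n (negb (forallb (fun i => negb (q x i)) (seq 0 (k x)))))).
  - intro x. now rewrite existsb_negb_forallb.
  - apply computableb_negb, (computableb_forallb (fun x i => negb (q x i))); [|exact Hk].
    apply computableb_negb, Hq.
Qed.

(** * Codes of finite strings *)

Definition ctl (c : nat) : nat := unpair2 (pred c).
Definition chd (c : nat) : nat := unpair1 (pred c).
Definition cskip (j c : nat) : nat := Nat.recursion c (fun _ d => ctl d) j.
Definition cnth (j c : nat) : nat := chd (cskip j c).
Definition clength (c : nat) : nat :=
  Nat.recursion 0 (fun j n => if cskip j c =? 0 then n else S n) c.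

Lemma code_inj s t : code s = code t -> s = t.
Proof.
  revert t; induction s as [|x s IH]; intros [|y t] E; cbn in E; try discriminate; [easy|].
  injection E as E. apply pair_inj in E as [-> E]. now rewrite (IH t E).
Qed.

Lemma code_surj c : exists s, code s = c.
Proof.
  induction c as [[|c] IH] using lt_wf_ind; [now exists []|].
  destruct (IH (unpair2 c)) as [s Hs]; [pose proof (unpair2_le c); lia|].
  exists (unpair1 c :: s). cbn [code]. now rewrite Hs, pair_unpair.
Qed.

Lemma length_le_code s : length s <= code s.
Proof. induction s as [|x s IH]; cbn; [lia|]. pose proof (le_pair_r x (code s)). lia. Qed.

Lemma code_lt_snoc s a : code s < code (s ++ [a]).
Proof.
  induction s as [|x s IH]; cbn; [lia|]. apply -> Nat.succ_lt_mono. now apply pair_lt_mono_r.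
Qed.

Lemma cskip_code j s : cskip j (code s) = code (skipn j s).
Proof.
  induction j as [|j IH]; [reflexivity|].
  unfold cskip in *. rewrite recursion_S, IH, <- (skipn_skipn 1 j).
  destruct (skipn j s) as [|x t]; [reflexivity|]. apply unpair2_pair.
Qed.

Lemma cnth_code j s : cnth j (code s) = nth j s 0.
Proof.
  unfold cnth. rewrite cskip_code.
  replace (nth j s 0) with (nth 0 (skipn j s) 0) by now rewrite nth_skipn, Nat.add_0_r.
  destruct (skipn j s) as [|x t]; [reflexivity|]. apply unpair1_pair.
Qed.

Lemma clength_code s : clength (code s) = length s.
Proof.
  assert (H : forall N, Nat.recursion 0 (fun j n => if cskip j (code s) =? 0 then n else S n) N
                        = Nat.min N (length s)).
  { induction N as [|N IH]; [reflexivity|].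
    rewrite recursion_S, IH, cskip_code.
    destruct (Nat.lt_ge_cases N (length s)) as [Hlt|Hge].
    - destruct (skipn N s) eqn:E; [|cbn [code Nat.eqb]; lia].
      apply (f_equal (@length nat)) in E. rewrite length_skipn in E. cbn in E. lia.
    - rewrite skipn_all2 by lia. cbn [code Nat.eqb]. lia. }
  unfold clength. rewrite H. pose proof (length_le_code s). lia.
Qed.

Lemma clength_le c : clength c <= c.
Proof. destruct (code_surj c) as [s <-]. rewrite clength_code. apply length_le_code. Qed.

Lemma length_pref p n : length (pref p n) = n.
Proof. unfold pref. now rewrite length_map, length_seq. Qed.

Lemma nth_pref p n i d : i < n -> nth i (pref p n) d = p i.
Proof.
  intro H. unfold pref. rewrite nth_indep with (d' := p 0) by now rewrite length_map, length_seq.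
  now rewrite map_nth, seq_nth.
Qed.

Lemma pref_S p n : pref p (S n) = pref p n ++ [p n].
Proof. unfold pref. now rewrite seq_S, map_app. Qed.

Lemma pref_nth s : pref (fun j => nth j s 0) (length s) = s.
Proof.
  apply nth_ext with (d := 0) (d' := 0); rewrite length_pref; [reflexivity|].
  intros i Hi. now rewrite nth_pref.
Qed.

Lemma cnth_pref p n i : i < n -> cnth i (code (pref p n)) = p i.
Proof. intro. rewrite cnth_code. now apply nth_pref. Qed.

Definition decode (c : nat) : list nat := pref (fun j => cnth j c) (clength c).

Lemma code_decode c : code (decode c) = c.
Proof.
  destruct (code_surj c) as [s <-]. unfold decode. rewrite clength_code.
  erewrite <- (pref_nth s) at 2. f_equal. unfold pref. apply map_ext. intro. apply cnth_code.
Qed.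

Lemma computable_cskip f g :
  computable f -> computable g -> computable (fun x => cskip (f x) (g x)).
Proof.
  intros Hf Hg. apply (computable_recursion g f (fun _ _ d => ctl d)); auto.
  apply computable_unpair2, computable_pred, computable_unpair2, computable_unpair2, computable_id.
Qed.

Lemma computable_cnth f g : computable f -> computable g -> computable (fun x => cnth (f x) (g x)).
Proof. intros. apply computable_unpair1, computable_pred, computable_cskip; auto. Qed.

Lemma computable_clength f : computable f -> computable (fun x => clength (f x)).
Proof.
  intro Hf.
  apply (computable_recursion (fun _ => 0) f (fun x j n => if cskip j (f x) =? 0 then n else S n));
    auto using computable_const.
  apply computable_if.
  - apply computableb_eqb; [|apply computable_const].
    apply computable_cskip; [apply computable_unpair1, computable_unpair2, computable_id|].
    apply (computable_comp f); auto using computable_unpair1, computable_id.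
  - apply computable_unpair2, computable_unpair2, computable_id.
  - apply computable_S, computable_unpair2, computable_unpair2, computable_id.
Qed.

Ltac computable_step :=
  cbv beta;
  lazymatch goal with
  | |- computableb _ =>
    first
      [ apply computableb_ltb | apply computableb_eqb | apply computableb_negb
      | apply computableb_andb | apply computableb_orb | apply computableb_even
      | apply computableb_forallb | apply computableb_existsb ]
  | |- computable (fun x => Nat.b2n (@?b x)) => change (computableb b)
  (* matched syntactically: [Nat.b2n] unfolds to an [if], on which
     [computable_if] would loop *)
  | |- computable (fun _ => if _ then _ else _) => apply computable_if
  | |- computable _ =>
    first
      [ apply computable_id | apply computable_const | apply computable_cnth
      | apply computable_clength | apply computable_S
      | apply computable_unpair1 | apply computable_unpair2 | apply computable_pair
      | apply computable_pred | apply computable_add | apply computable_sub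
      | apply computable_mul | apply computable_div2 ]
  end.

Ltac computability := repeat computable_step.

Definition cprefix (a b : nat) : bool :=
  forallb (fun j => cnth j a =? cnth j b) (seq 0 (clength a)).

Definition cstrinc (u : nat) : bool :=
  forallb (fun j => cnth j u <? cnth (S j) u) (seq 0 (pred (clength u))).

Definition cincl (s u : nat) : bool :=
  forallb (fun j => existsb (fun k => cnth j s =? cnth k u) (seq 0 (clength u)))
    (seq 0 (clength s)).

Lemma cprefix_code s t :
  cprefix (code s) (code t) = true <-> forall j, j < length s -> nth j s 0 = nth j t 0.
Proof.
  unfold cprefix. rewrite forallb_forall, clength_code.
  setoid_rewrite in_seq. setoid_rewrite Nat.eqb_eq. setoid_rewrite cnth_code.
  split; intros H j Hj; apply H; lia.
Qed.

Lemma cstrinc_code u : cstrinc (code u) = true <-> strinc_list u.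
Proof.
  unfold cstrinc, strinc_list. rewrite forallb_forall, clength_code.
  setoid_rewrite in_seq. setoid_rewrite Nat.ltb_lt. setoid_rewrite cnth_code.
  split; intros H j Hj; apply H; lia.
Qed.

Lemma incl_nth (s u : list nat) :
  incl s u <-> forall j, j < length s -> exists k, k < length u /\ nth j s 0 = nth k u 0.
Proof.
  split.
  - intros H j Hj. destruct (In_nth u (nth j s 0) 0) as [k [Hk E]]; [apply H, nth_In, Hj|].
    now exists k.
  - intros H a Ha. destruct (In_nth s a 0 Ha) as [j [Hj <-]].
    destruct (H j Hj) as [k [Hk ->]]. now apply nth_In.
Qed.

Lemma cincl_code s u : cincl (code s) (code u) = true <-> incl s u.
Proof.
  unfold cincl. rewrite incl_nth, forallb_forall, clength_code.
  setoid_rewrite existsb_exists. setoid_rewrite in_seq.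
  setoid_rewrite Nat.eqb_eq. setoid_rewrite cnth_code. rewrite clength_code.
  split; intros H j Hj; destruct (H j ltac:(lia)) as [k [Hk E]]; exists k; split; auto; lia.
Qed.

(** * Computable functionals on Baire space *)

Definition local_code (need : nat -> nat) (F : nat -> nat -> nat) (z : nat) : nat :=
  if need (unpair2 z) <? clength (unpair1 z) then S (F (unpair1 z) (unpair2 z)) else 0.

Lemma computable_local_code need F :
  computable need -> computable (fun z => F (unpair1 z) (unpair2 z)) ->
  computable (local_code need F).
Proof.
  intros Hneed HF. unfold local_code.
  apply computable_if; [|apply computable_S, HF|apply computable_const].
  apply computableb_ltb; [|apply computable_clength, computable_unpair1, computable_id].
  apply (computable_comp need); auto using computable_unpair2, computable_id.
Qed.

Lemma computes_local_code need F p q :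
  (forall n i, need i < n -> F (code (pref p n)) i = q i) ->
  computes (local_code need F) p q.
Proof.
  intros HF i.
  assert (E : forall n, local_code need F (pair (code (pref p n)) i)
                        = if need i <? n then S (F (code (pref p n)) i) else 0).
  { intro n. unfold local_code. now rewrite unpair1_pair, unpair2_pair, clength_code, length_pref. }
  split.
  - exists (S (need i)). rewrite E, (proj2 (Nat.ltb_lt _ _)), HF by lia. reflexivity.
  - intros n v. rewrite E. destruct (Nat.ltb_spec (need i) n); [|discriminate].
    intro Hv. injection Hv as <-. now apply HF.
Qed.

Lemma sW_le_intro (A B : problem) (Phi Psi : (nat -> nat) -> nat -> nat) hPhi hPsi :
  computable hPhi -> computable hPsi ->
  (forall p, computes hPhi p (Phi p)) -> (forall q, computes hPsi q (Psi q)) ->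
  (forall p y, A p y -> exists z, B (Phi p) z) ->
  (forall p y r, A p y -> B (Phi p) r -> A p (Psi r)) ->
  sW_le A B.
Proof.
  intros HcPhi HcPsi HPhi HPsi Hdom Hback.
  exists hPhi, hPsi. split; [exact HcPhi|split; [exact HcPsi|]].
  intros G HG p [y Hy]. exists (Phi p), (Psi (G (Phi p))).
  split; [apply HPhi|split; [apply HPsi|]].
  apply (Hback p y); [exact Hy|]. apply HG, (Hdom p y Hy).
Qed.

(** * Homogeneous solutions and clopen sets *)

Lemma strinc_id : strinc (fun n => n).
Proof. intro. lia. Qed.

Lemma strinc_lt f i j : strinc f -> i < j -> f i < f j.
Proof. intros Hf Hij. induction Hij; [apply Hf|]. specialize (Hf m). lia. Qed.

Lemma strinc_lt_inv f i j : strinc f -> f i < f j -> i < j.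
Proof.
  intros Hf H. destruct (Nat.lt_trichotomy i j) as [|[->|Hji]]; [easy|lia|].
  pose proof (strinc_lt f j i Hf Hji). lia.
Qed.

Lemma strinc_comp f g : strinc f -> strinc g -> strinc (fun n => f (g n)).
Proof. intros Hf Hg n. now apply strinc_lt. Qed.

Lemma lands_self P f : lands P f -> P f.
Proof. intro H. exact (H _ strinc_id). Qed.

Lemma FindHS_Pi01_iff p q :
  FindHS_Pi01 p q <-> open_name p /\ strinc q /\ avoids (in_open p) q.
Proof.
  split.
  - intros (Hp & (Hq & [Hl|Ha]) & Hout); [now apply lands_self in Hl | tauto].
  - intros (Hp & Hq & Ha). split; [exact Hp|split; [split; auto|]].
    exact (Ha _ strinc_id).
Qed.

Lemma clopen_lands_iff_avoids p q :
  clopen_name p -> strinc q -> lands (in_open (pi1 p)) q <-> avoids (in_open (pi2 p)) q.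
Proof.
  intros (_ & _ & Hc) Hq. split; intros H g Hg; specialize (H g Hg);
    specialize (Hc _ (strinc_comp _ _ Hq Hg)); tauto.
Qed.

Lemma FindHS_Delta01_iff p q :
  FindHS_Delta01 p q <-> clopen_name p /\ strinc q /\ lands (in_open (pi1 p)) q.
Proof.
  split.
  - intros (Hp & (Hq & [Hl|Ha]) & Hin); [tauto | now destruct (Ha _ strinc_id)].
  - intros (Hp & Hq & Hl). split; [exact Hp|split; [split; auto|now apply lands_self]].
Qed.

Lemma enumerated_ext p p' s : (forall n, p n = p' n) -> enumerated p s -> enumerated p' s.
Proof. intros E [n Hn]. exists n. now rewrite <- E. Qed.

Lemma open_name_ext p p' : (forall n, p n = p' n) -> open_name p -> open_name p'.
Proof. intros E Hp s Hs. apply Hp, (enumerated_ext p'); auto. Qed.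

Lemma in_open_ext p p' h : (forall n, p n = p' n) -> in_open p h -> in_open p' h.
Proof.
  intros E (Hh & s & Hs & Hpref). split; [exact Hh|].
  exists s. split; [exact (enumerated_ext _ _ _ E Hs)|exact Hpref].
Qed.

Definition interleave (p1 p2 : nat -> nat) (i : nat) : nat :=
  if Nat.even i then p1 (Nat.div2 i) else p2 (Nat.div2 i).

Lemma pi1_interleave p1 p2 n : pi1 (interleave p1 p2) n = p1 n.
Proof. unfold pi1, interleave. now rewrite Nat.even_even, Nat.div2_double. Qed.

Lemma pi2_interleave p1 p2 n : pi2 (interleave p1 p2) n = p2 n.
Proof. unfold pi2, interleave. now rewrite Nat.even_odd, Nat.div2_odd'. Qed.

Definition pairs_name (B : nat -> nat -> bool) (n : nat) : nat :=
  if (unpair1 n <? unpair2 n) && B (unpair1 n) (unpair2 n)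
  then S (code [unpair1 n; unpair2 n]) else 0.

Lemma enumerated_pairs_name B s :
  enumerated (pairs_name B) s <-> exists a b, a < b /\ B a b = true /\ s = [a; b].
Proof.
  split.
  - intros [n Hn]. unfold pairs_name in Hn.
    destruct (Nat.ltb_spec (unpair1 n) (unpair2 n)), (B (unpair1 n) (unpair2 n)) eqn:HB;
      cbn [andb] in Hn; try discriminate.
    injection Hn as Hn. apply (code_inj [_; _]) in Hn. now exists (unpair1 n), (unpair2 n).
  - intros (a & b & Hab & HB & ->). exists (pair a b). unfold pairs_name.
    rewrite unpair1_pair, unpair2_pair, HB, (proj2 (Nat.ltb_lt _ _) Hab). reflexivity.
Qed.

Lemma open_name_pairs_name B : open_name (pairs_name B).
Proof.
  intros s (a & b & Hab & _ & ->)%enumerated_pairs_name [|i] Hi; cbn in *; [exact Hab|lia].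
Qed.

Lemma in_open_pairs_name B h : in_open (pairs_name B) h <-> strinc h /\ B (h 0) (h 1) = true.
Proof.
  split.
  - intros (Hh & s & (a & b & _ & HB & ->)%enumerated_pairs_name & Hpref).
    injection Hpref as -> ->. easy.
  - intros [Hh HB]. split; [exact Hh|]. exists [h 0; h 1]. split; [|reflexivity].
    apply enumerated_pairs_name. exists (h 0), (h 1). auto.
Qed.

Definition clopen_of (B : nat -> nat -> bool) : nat -> nat :=
  interleave (pairs_name B) (pairs_name (fun a b => negb (B a b))).

Lemma in_open_clopen_of B h :
  in_open (pi1 (clopen_of B)) h <-> strinc h /\ B (h 0) (h 1) = true.
Proof.
  rewrite <- in_open_pairs_name. unfold clopen_of.
  split; apply in_open_ext; intro n; now rewrite pi1_interleave.
Qed.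

Lemma clopen_name_clopen_of B : clopen_name (clopen_of B).
Proof.
  assert (E2 : forall h, in_open (pi2 (clopen_of B)) h <->
                         in_open (pairs_name (fun a b => negb (B a b))) h).
  { unfold clopen_of. split; apply in_open_ext; intro n; now rewrite pi2_interleave. }
  split; [|split].
  - unfold clopen_of. apply (open_name_ext (pairs_name B)), open_name_pairs_name.
    intro n. now rewrite pi1_interleave.
  - unfold clopen_of.
    apply (open_name_ext (pairs_name (fun a b => negb (B a b)))), open_name_pairs_name.
    intro n. now rewrite pi2_interleave.
  - intros f Hf. rewrite in_open_clopen_of, E2, in_open_pairs_name.
    destruct (B (f 0) (f 1)); intuition discriminate.
Qed.

(** * Trees *)

Definition path (T : nat -> bool) (f : nat -> nat) : Prop := forall n, T (code (pref f n)) = true.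

Definition prefix_closed (T : nat -> bool) : Prop :=
  forall s t, T (code (s ++ t)) = true -> T (code s) = true.

Definition extends_in (T : nat -> bool) (a b : nat) : bool :=
  T a && T b && (clength a <? clength b) && cprefix a b.

Definition tree_clopen (T : nat -> bool) : nat -> nat := clopen_of (extends_in T).

Definition diag (f : nat -> nat) (n : nat) : nat := cnth n (f (S n)).

Lemma extends_in_code T s t :
  extends_in T (code s) (code t) = true <->
  T (code s) = true /\ T (code t) = true /\ length s < length t /\
  forall j, j < length s -> nth j s 0 = nth j t 0.
Proof.
  unfold extends_in. rewrite !andb_true_iff, cprefix_code, !clength_code, Nat.ltb_lt. tauto.
Qed.

Lemma FindHS_Delta01_tree_clopen T x :
  path T x -> FindHS_Delta01 (tree_clopen T) (fun k => code (pref x k)).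
Proof.
  intro Hx.
  assert (Hinc : strinc (fun k => code (pref x k))).
  { intro n. rewrite pref_S. apply code_lt_snoc. }
  apply FindHS_Delta01_iff. split; [apply clopen_name_clopen_of|split; [exact Hinc|]].
  intros g Hg. apply in_open_clopen_of. split; [exact (strinc_comp _ _ Hinc Hg)|].
  apply extends_in_code. rewrite !length_pref. repeat split; auto using Hx.
  intros j Hj. rewrite !nth_pref; [reflexivity| |exact Hj]. specialize (Hg 0). lia.
Qed.

Lemma path_diag_of_FindHS_Delta01 T r :
  prefix_closed T -> FindHS_Delta01 (tree_clopen T) r -> path T (diag r).
Proof.
  intros HT (_ & Hr & Hl)%FindHS_Delta01_iff.
  set (s k := decode (r k)).
  assert (Hs : forall k, r k = code (s k)) by (intro; symmetry; apply code_decode).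
  assert (Hext : forall i j, i < j ->
    T (code (s j)) = true /\ length (s i) < length (s j) /\
    forall n, n < length (s i) -> nth n (s i) 0 = nth n (s j) 0).
  { intros i j Hij.
    set (g n := match n with 0 => i | S n' => j + n' end).
    assert (Hg : strinc g) by (intros [|n]; cbn; lia).
    destruct (proj1 (in_open_clopen_of _ _) (Hl g Hg)) as [_ Hij']. cbn in Hij'.
    rewrite Nat.add_0_r, !Hs in Hij'. apply extends_in_code in Hij'. tauto. }
  assert (Hlen : forall k, k <= length (s k)).
  { induction k as [|k IH]; [lia|]. pose proof (Hext k (S k) (Nat.lt_succ_diag_r k)). lia. }
  intro m.
  assert (Hpref : pref (diag r) m = firstn m (s (S m))).
  { apply nth_ext with (d := 0) (d' := 0).
    - rewrite length_pref, length_firstn. specialize (Hlen (S m)). lia.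
    - intros n Hn. rewrite length_pref in Hn.
      rewrite nth_pref, nth_firstn, (proj2 (Nat.ltb_lt _ _)) by exact Hn.
      unfold diag. rewrite Hs, cnth_code.
      apply Hext; [lia|]. specialize (Hlen (S n)). lia. }
  rewrite Hpref. apply (HT _ (skipn m (s (S m)))). rewrite firstn_skipn.
  exact (proj1 (Hext m (S m) (Nat.lt_succ_diag_r m))).
Qed.

Definition avoid_tree (look : nat -> nat) (u : nat) : bool :=
  cstrinc u &&
  forallb (fun k => (look k =? 0) || negb (cincl (pred (look k)) u)) (seq 0 (clength u)).

Lemma avoid_tree_code look u :
  avoid_tree look (code u) = true <->
  strinc_list u /\ forall k s, k < length u -> look k = S (code s) -> ~ incl s u.
Proof.
  unfold avoid_tree. rewrite andb_true_iff, cstrinc_code, forallb_forall, clength_code.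
  setoid_rewrite in_seq. split; intros [Hu H]; split; auto.
  - intros k s Hk Hs Hincl%cincl_code. specialize (H k (conj (Nat.le_0_l k) Hk)).
    rewrite Hs in H. cbn [Nat.eqb orb pred] in H. now rewrite Hincl in H.
  - intros k [_ Hk]. destruct (look k) as [|c] eqn:Hc; [reflexivity|].
    destruct (code_surj c) as [s <-]. rewrite orb_false_l. cbn [pred].
    apply negb_true_iff, not_true_is_false. rewrite cincl_code. exact (H k s Hk Hc).
Qed.

Lemma avoid_tree_prefix_closed look : prefix_closed (avoid_tree look).
Proof.
  intros s t (Hinc & H)%avoid_tree_code. rewrite length_app in *. apply avoid_tree_code. split.
  - intros i Hi. specialize (Hinc i ltac:(rewrite length_app; lia)).
    now rewrite !app_nth1 in Hinc by lia.
  - intros k u Hk Hu Hincl. apply (H k u ltac:(lia) Hu). now apply incl_appl.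
Qed.

Lemma incl_pref_subsequence f m s :
  strinc f -> strinc_list s -> incl s (pref f m) ->
  exists g, strinc g /\ pref (fun n => f (g n)) (length s) = s.
Proof.
  intros Hf Hs Hincl.
  set (idx a := match find (fun i => f i =? a) (seq 0 m) with Some i => i | None => 0 end).
  assert (Hidx : forall a, In a (pref f m) -> idx a < m /\ f (idx a) = a).
  { intros a (i & Hia & Hi)%in_map_iff. unfold idx.
    destruct (find (fun i => f i =? a) (seq 0 m)) as [j|] eqn:Hfind.
    - apply find_some in Hfind as [Hj%in_seq Hfj%Nat.eqb_eq]. split; [lia|exact Hfj].
    - apply (find_none _ _ Hfind) in Hi. now apply Nat.eqb_neq in Hi. }
  set (g n := if n <? length s then idx (nth n s 0) else m + n).
  assert (Hg : forall n, n < length s -> g n < m /\ f (g n) = nth n s 0).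
  { intros n Hn. unfold g. rewrite (proj2 (Nat.ltb_lt _ _) Hn).
    apply Hidx, Hincl, nth_In, Hn. }
  exists g. split.
  - intro n. destruct (Nat.lt_ge_cases (S n) (length s)) as [HSn|HSn].
    + apply (strinc_lt_inv f); [exact Hf|].
      rewrite (proj2 (Hg n ltac:(lia))), (proj2 (Hg (S n) HSn)). now apply Hs.
    + unfold g at 2. rewrite (proj2 (Nat.ltb_ge _ _) HSn).
      destruct (Nat.lt_ge_cases n (length s)) as [Hn|Hn].
      * pose proof (proj1 (Hg n Hn)). lia.
      * unfold g. rewrite (proj2 (Nat.ltb_ge _ _) Hn). lia.
  - apply nth_ext with (d := 0) (d' := 0); rewrite length_pref; [reflexivity|].
    intros n Hn. rewrite nth_pref by exact Hn. apply Hg, Hn.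
Qed.

Lemma path_avoid_tree_iff look f :
  open_name look -> path (avoid_tree look) f <-> strinc f /\ avoids (in_open look) f.
Proof.
  intro Hlook. split.
  - intro Hpath.
    assert (Hf : strinc f).
    { intro n. destruct (proj1 (avoid_tree_code _ _) (Hpath (S (S n)))) as [Hinc _].
      specialize (Hinc n ltac:(rewrite length_pref; lia)). now rewrite !nth_pref in Hinc by lia. }
    split; [exact Hf|]. intros g Hg (_ & s & [k Hk] & Hpref).
    set (m := S (k + g (length s))).
    destruct (proj1 (avoid_tree_code _ _) (Hpath m)) as [_ Havoid].
    apply (Havoid k s ltac:(rewrite length_pref; lia) Hk).
    intros a Ha. rewrite <- Hpref in Ha. apply in_map_iff in Ha as (j & <- & Hj%in_seq).
    apply in_map, in_seq. pose proof (strinc_lt g j (length s) Hg ltac:(lia)). lia.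
  - intros [Hf Havoid] n. apply avoid_tree_code. split.
    + intros i Hi. rewrite length_pref in Hi. rewrite !nth_pref by lia. apply Hf.
    + intros k s _ Hk Hincl.
      destruct (incl_pref_subsequence f n s Hf (Hlook s (ex_intro _ k Hk)) Hincl)
        as (g & Hg & Hpref).
      apply (Havoid g Hg). split; [exact (strinc_comp _ _ Hf Hg)|].
      exists s. split; [now exists k|exact Hpref].
Qed.

Lemma tree_clopen_ext T T' i :
  (forall x, x <= i -> T x = T' x) -> tree_clopen T i = tree_clopen T' i.
Proof.
  intro H. pose proof (unpair2_le (Nat.div2 i)). pose proof (Nat.le_div2_diag_l i).
  unfold tree_clopen, clopen_of, interleave, pairs_name, extends_in.
  destruct (Nat.ltb_spec (unpair1 (Nat.div2 i)) (unpair2 (Nat.div2 i)));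
    [|now destruct (Nat.even i)].
  rewrite !(H (unpair1 _)), !(H (unpair2 _)) by lia. reflexivity.
Qed.

Lemma avoid_tree_ext look look' u :
  (forall k, k < clength u -> look k = look' k) -> avoid_tree look u = avoid_tree look' u.
Proof.
  intro H. unfold avoid_tree. f_equal. apply forallb_ext_in.
  intros k Hk%in_seq. rewrite H by lia. reflexivity.
Qed.

Definition tree_clopen_code (Tc : nat -> nat -> bool) : nat -> nat :=
  local_code (fun i => i) (fun c => tree_clopen (Tc c)).

Lemma computable_tree_clopen_code Tc :
  computableb (fun z => Tc (unpair1 z) (unpair2 z)) -> computable (tree_clopen_code Tc).
Proof.
  intro HTc. apply computable_local_code; [apply computable_id|].
  unfold tree_clopen, clopen_of, interleave, pairs_name, extends_in, cprefix. cbn [code].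
  computability; apply computableb_comp2; computability; exact HTc.
Qed.

Lemma computes_tree_clopen_code Tc T p :
  (forall n x, x < n -> Tc (code (pref p n)) x = T x) ->
  computes (tree_clopen_code Tc) p (tree_clopen T).
Proof.
  intro HT. apply computes_local_code. intros n i Hi.
  apply tree_clopen_ext. intros x Hx. apply HT. lia.
Qed.

Definition diag_code : nat -> nat := local_code S (fun c i => cnth i (cnth (S i) c)).

Lemma computable_diag_code : computable diag_code.
Proof. apply computable_local_code; computability. Qed.

Lemma computes_diag_code f : computes diag_code f (diag f).
Proof. apply computes_local_code. intros n i Hi. now rewrite cnth_pref. Qed.

Definition id_code : nat -> nat := local_code (fun i => i) (fun c i => cnth i c).

Lemma computable_id_code : computable id_code.
Proof. apply computable_local_code; computability. Qed.

Lemma computes_id_code f : computes id_code f f.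
Proof. apply computes_local_code. intros n i Hi. now rewrite cnth_pref. Qed.

Lemma body_iff_path p f : body p f <-> path (fun c => p c =? 1) f.
Proof. unfold body, path, in_tree. now setoid_rewrite Nat.eqb_eq. Qed.

Lemma prefix_closed_tree_name p : is_tree_name p -> prefix_closed (fun c => p c =? 1).
Proof. intros [_ Hp] s t. rewrite !Nat.eqb_eq. apply Hp. Qed.

Lemma is_tree_name_b2n T : prefix_closed T -> is_tree_name (fun c => Nat.b2n (T c)).
Proof.
  intro HT. split.
  - intro s. destruct (T (code s)); auto.
  - unfold in_tree. intros s t. destruct (T (code (s ++ t))) eqn:E; [|discriminate].
    now rewrite (HT s t E).
Qed.

Lemma body_b2n T f : body (fun c => Nat.b2n (T c)) f <-> path T f.
Proof.
  unfold body, path, in_tree. split; intros H n; specialize (H n); now destruct (T _).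
Qed.

Lemma C_Baire_le_FindHS_Delta01 : sW_le C_Baire FindHS_Delta01.
Proof.
  apply (sW_le_intro _ _ (fun p => tree_clopen (fun c => p c =? 1)) diag
           (tree_clopen_code (fun c x => cnth x c =? 1)) diag_code).
  - apply computable_tree_clopen_code. computability.
  - exact computable_diag_code.
  - intro p. apply computes_tree_clopen_code. intros n x Hx. now rewrite cnth_pref.
  - exact computes_diag_code.
  - intros p y [_ Hy]. exists (fun k => code (pref y k)).
    apply FindHS_Delta01_tree_clopen, body_iff_path, Hy.
  - intros p y r [Hp _] Hr. split; [exact Hp|]. apply body_iff_path.
    exact (path_diag_of_FindHS_Delta01 _ _ (prefix_closed_tree_name p Hp) Hr).
Qed.

Lemma FindHS_Pi01_le_FindHS_Delta01 : sW_le FindHS_Pi01 FindHS_Delta01.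
Proof.
  apply (sW_le_intro _ _ (fun p => tree_clopen (avoid_tree p)) diag
           (tree_clopen_code (fun c => avoid_tree (fun k => cnth k c))) diag_code).
  - apply computable_tree_clopen_code. unfold avoid_tree, cstrinc, cincl. computability.
  - exact computable_diag_code.
  - intro p. apply computes_tree_clopen_code. intros n x Hx. apply avoid_tree_ext.
    intros k Hk. pose proof (clength_le x). now rewrite cnth_pref by lia.
  - exact computes_diag_code.
  - intros p y (Hp & Hy)%FindHS_Pi01_iff. exists (fun k => code (pref y k)).
    apply FindHS_Delta01_tree_clopen, path_avoid_tree_iff; [exact Hp|exact Hy].
  - intros p y r (Hp & _)%FindHS_Pi01_iff Hr. apply FindHS_Pi01_iff. split; [exact Hp|].
    apply path_avoid_tree_iff; [exact Hp|].
    exact (path_diag_of_FindHS_Delta01 _ _ (avoid_tree_prefix_closed p) Hr).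
Qed.

Lemma FindHS_Delta01_le_C_Baire : sW_le FindHS_Delta01 C_Baire.
Proof.
  apply (sW_le_intro _ _ (fun p c => Nat.b2n (avoid_tree (pi2 p) c)) (fun f => f)
           (local_code (fun i => 2 * i + 1)
              (fun c i => Nat.b2n (avoid_tree (fun k => cnth (2 * k + 1) c) i)))
           id_code).
  - apply computable_local_code; unfold avoid_tree, cstrinc, cincl; computability.
  - exact computable_id_code.
  - intro p. apply computes_local_code. intros n i Hi. f_equal. apply avoid_tree_ext.
    intros k Hk. pose proof (clength_le i). now rewrite cnth_pref by lia.
  - exact computes_id_code.
  - intros p y (Hp & Hy & Hl)%FindHS_Delta01_iff. exists y.
    split; [apply is_tree_name_b2n, avoid_tree_prefix_closed|].
    apply body_b2n, path_avoid_tree_iff; [apply Hp|].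
    split; [exact Hy|]. now apply clopen_lands_iff_avoids.
  - intros p y r (Hp & _)%FindHS_Delta01_iff [_ Hr%body_b2n].
    apply path_avoid_tree_iff in Hr as [Hr Hav]; [|apply Hp].
    apply FindHS_Delta01_iff. split; [exact Hp|split; [exact Hr|]].
    now apply clopen_lands_iff_avoids.
Qed.

Lemma FindHS_Delta01_le_FindHS_Pi01 : sW_le FindHS_Delta01 FindHS_Pi01.
Proof.
  apply (sW_le_intro _ _ pi2 (fun f => f)
           (local_code (fun i => 2 * i + 1) (fun c i => cnth (2 * i + 1) c)) id_code).
  - apply computable_local_code; computability.
  - exact computable_id_code.
  - intro p. apply computes_local_code. intros n i Hi. now rewrite cnth_pref.
  - exact computes_id_code.
  - intros p y (Hp & Hy & Hl)%FindHS_Delta01_iff. exists y.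
    apply FindHS_Pi01_iff. split; [apply Hp|split; [exact Hy|]].
    now apply clopen_lands_iff_avoids.
  - intros p y r (Hp & _)%FindHS_Delta01_iff (_ & Hr & Hav)%FindHS_Pi01_iff.
    apply FindHS_Delta01_iff. split; [exact Hp|split; [exact Hr|]].
    now apply clopen_lands_iff_avoids.
Qed.

Theorem mainTheorem3 :
  sW_eq C_Baire FindHS_Delta01 /\ sW_eq FindHS_Delta01 FindHS_Pi01.
Proof.
  split; split.
  - exact C_Baire_le_FindHS_Delta01.
  - exact FindHS_Delta01_le_C_Baire.
  - exact FindHS_Delta01_le_FindHS_Pi01.
  - exact FindHS_Pi01_le_FindHS_Delta01.
Qed.
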